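(* Let $\mathcal{T}$ be a planar triangulation, $m\in\mathbb{Z}_{\ge 0}$, $r\in\mathbb{Z}_{\ge -1}$, and $\mathbf{r}$ a smoothness distribution with $\mathbf{r}(\tau)\in\{r,-1\}$ for every interior edge $\tau$, such that $\mathcal{Q}^{\mathbf r}$ is lower-acyclic. Let $\sigma$ be a face bounded by interior edges $\tau_1,\tau_2,\tau_3$, and let $\gamma_i=\tau_i\cap\tau_{i+1}$ (indices cyclic in $1,2,3$) be interior vertices of $\mathcal{T}$. Assume that for all $i\in\{1,2,3\}$: $\mathbf{r}(\tau_i)=r$, and $\mathbf{r}(\tau)\neq -1$ for every edge $\tau$ incident on $\gamma_i$. Let $\ell_i$ be an affine-linear form vanishing on $\tau_i$, and let $$\phi:\bigoplus_{i=1}^3{\mathcal{P}}_m/\langle\ell_i^{r+1}\rangle\longrightarrow\bigoplus_{i=1}^3{\mathcal{P}}_m/\mathfrak{J}^{\mathbf r}_{\gamma_i},\qquad (a_1,a_2,a_3)\mapsto(-a_1+a_2,\,-a_2+a_3,\,a_1-a_3).$$ If the cokernel of $\phi$ is trivial, then $\mathcal{Q}^{\mathbf s}$ is lower-acyclic, where $\mathbf{s}(\tau)=\mathbf{r}(\tau)$ for interior edges $\tau\notin\{\tau_1,\tau_2,\tau_3\}$ and $\mathbf{s}(\tau_i)=-1$ for $i=1,2,3$.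
   Context: $\mathcal{T}$ is a finite planar mesh: a subdivision of a closed polygonal region $\Omega\subset\mathbb{R}^2$ (possibly not simply connected) into closed polygonal faces (here triangles) meeting along straight edges and vertices. An edge or vertex is interior if it is not contained in $\partial\Omega$; $\mathcal{T}^\circ_1,\mathcal{T}^\circ_0$ denote interior edges and interior vertices, $\mathcal{T}_2$ the faces. ${\mathcal{P}}_m$ is the space of real bivariate polynomials of total degree at most $m$; for polynomials $f_1,\dots,f_k$, $\langle f_1,\dots,f_k\rangle$ denotes the subspace of ${\mathcal{P}}_m$ of all polynomial combinations $\sum g_if_i$ lying in ${\mathcal{P}}_m$. A smoothness distribution is a map $\mathbf{r}:\mathcal{T}^\circ_1\to\mathbb{Z}_{\ge -1}$. For $\tau\in\mathcal{T}^\circ_1$ let $\ell_\tau$ be a nonzero affine-linear polynomial vanishing on $\tau$ and $\mathfrak{J}^{\mathbf r}_\tau=\langle \ell_\tau^{\mathbf r(\tau)+1}\rangle$ (equal to ${\mathcal{P}}_m$ if $\mathbf r(\tau)=-1$); for $\gamma\in\mathcal{T}^\circ_0$, $\mathfrak{J}^{\mathbf r}_\gamma=\sum_{\tau\ni\gamma}\mathfrak{J}^{\mathbf r}_\tau$ over interior edges containing $\gamma$. $\mathcal{C}$ is the chain complex $\bigoplus_{\sigma\in\mathcal{T}_2}{\mathcal{P}}_m\to\bigoplus_{\tau\in\mathcal{T}^\circ_1}{\mathcal{P}}_m\to\bigoplus_{\gamma\in\mathcal{T}^\circ_0}{\mathcal{P}}_m$ (degrees $2,1,0$) with the cellular boundary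 maps of $\mathcal{T}$ relative to $\partial\Omega$ (signs $\pm1$ from fixed orientations). $\mathcal{I}^{\mathbf r}$ is the subcomplex $0\to\bigoplus_{\tau}\mathfrak{J}^{\mathbf r}_\tau\to\bigoplus_{\gamma}\mathfrak{J}^{\mathbf r}_\gamma$ and $\mathcal{Q}^{\mathbf r}=\mathcal{C}/\mathcal{I}^{\mathbf r}$; $H_2(\mathcal{Q}^{\mathbf r})$ is the space of piecewise polynomials in ${\mathcal{P}}_m$ that are $C^{\mathbf r(\tau)}$ across each interior edge $\tau$. $\mathcal{Q}^{\mathbf r}$ is lower-acyclic if $H_1(\mathcal{Q}^{\mathbf r})=H_0(\mathcal{Q}^{\mathbf r})=0$. *)

From HB Require Import structures.
From mathcomp Require Import all_boot all_order all_algebra.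
From mathcomp Require Import mpoly.
Set Implicit Arguments. Unset Strict Implicit. Unset Printing Implicit Defensive.
Import Order.TTheory GRing.Theory Num.Theory.
Local Open Scope ring_scope.

(* Vertices carry coordinates in the plane, edges are oriented pairs of
   vertices (tail, head), faces are triples of vertices (listed
   counterclockwise, see [planar_triangulation]). *)
Record mesh (R : realFieldType) := Mesh {
  nV : nat; nE : nat; nF : nat;
  vpos  : 'I_nV -> R * R;
  evert : 'I_nE -> 'I_nV * 'I_nV;
  fvert : 'I_nF -> 'I_nV * 'I_nV * 'I_nV
}.

Section Mesh.
Variables (R : realFieldType) (M : mesh R).

Definition etail (e : 'I_(nE M)) := (evert e).1.
Definition ehead (e : 'I_(nE M)) := (evert e).2.
Definition fv1 (f : 'I_(nF M)) := (fvert f).1.1.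
Definition fv2 (f : 'I_(nF M)) := (fvert f).1.2.
Definition fv3 (f : 'I_(nF M)) := (fvert f).2.

Definition edge_set (e : 'I_(nE M)) : {set 'I_(nV M)} := [set etail e; ehead e].
Definition face_set (f : 'I_(nF M)) : {set 'I_(nV M)} := [set fv1 f; fv2 f; fv3 f].

(* twice the signed area of the triangle p q s *)
Definition orient (p q s : R * R) : R :=
  (q.1 - p.1) * (s.2 - p.2) - (q.2 - p.2) * (s.1 - p.1).

Definition in_hull (A : {set 'I_(nV M)}) (x : R * R) : Prop :=
  exists w : 'I_(nV M) -> R,
    [/\ forall v, 0 <= w v, forall v, v \notin A -> w v = 0,
        \sum_v w v = 1,
        x.1 = \sum_v w v * (vpos v).1 & x.2 = \sum_v w v * (vpos v).2].

Definition face_has_edge (f : 'I_(nF M)) (e : 'I_(nE M)) : bool :=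
  edge_set e \subset face_set f.

(* Geometric validity: a finite subdivision of a closed polygonal region
   into nondegenerate (counterclockwise listed) triangles, meeting along
   common edges / vertices only. *)
Definition planar_triangulation : Prop :=
  (injective (@vpos _ M)) /\
  (forall e, etail e != ehead e) /\
  (forall e e', edge_set e = edge_set e' -> e = e') /\
  (forall f, 0 < orient (vpos (fv1 f)) (vpos (fv2 f)) (vpos (fv3 f))) /\
  (forall f, (exists e, edge_set e = [set fv1 f; fv2 f]) /\
             (exists e, edge_set e = [set fv2 f; fv3 f]) /\
             (exists e, edge_set e = [set fv3 f; fv1 f])) /\
  (forall e, exists f, face_has_edge f e) /\
  (forall v, exists e, v \in edge_set e) /\
  (injective face_set) /\
  (forall f g x, f != g -> in_hull (face_set f) x -> in_hull (face_set g) x ->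
        in_hull (face_set f :&: face_set g) x).

(* An edge is interior (not contained in the boundary of the region)
   iff it is shared by two faces; a vertex is interior iff it is not on
   any boundary edge (the boundary of the region is the union of the
   boundary edges). *)
Definition interior_edge (e : 'I_(nE M)) : bool :=
  (1 < #|[set f | face_has_edge f e]|)%N.
Definition interior_vertex (v : 'I_(nV M)) : bool :=
  [forall e, (v \in edge_set e) ==> interior_edge e].

Notation poly2 := {mpoly R[2]}.

(* p in P_m : total degree at most m (msize = 1 + total degree) *)
Definition inPm (m : nat) (p : poly2) : Prop := (msize p <= m.+1)%N.

Definition in_gen (m : nat) (f p : poly2) : Prop :=
  inPm m p /\ exists g : poly2, p = g * f.

Definition ell (e : 'I_(nE M)) : poly2 :=
  let: (xu, yu) := vpos (etail e) in
  let: (xv, yv) := vpos (ehead e) in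
  (yv - yu) *: ('X_(0 : 'I_2) - xu%:MP) - (xv - xu) *: ('X_(1 : 'I_2) - yu%:MP).

Definition pt (x : R * R) : 'I_2 -> R := fun i => if i == 0 :> nat then x.1 else x.2.

Definition affine_vanishing_on (p : poly2) (e : 'I_(nE M)) : Prop :=
  [/\ p != 0, (msize p <= 2)%N &
      forall t : R, 0 <= t <= 1 ->
        p.@[pt ((1 - t) * (vpos (etail e)).1 + t * (vpos (ehead e)).1,
                (1 - t) * (vpos (etail e)).2 + t * (vpos (ehead e)).2)] = 0].

Definition smoothness_distribution (rr : 'I_(nE M) -> int) : Prop :=
  forall e, interior_edge e -> -1 <= rr e.

Definition J_edge (m : nat) (rr : 'I_(nE M) -> int) (e : 'I_(nE M)) (p : poly2) : Prop :=
  in_gen m (ell e ^+ absz (rr e + 1)) p.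

Definition J_vert (m : nat) (rr : 'I_(nE M) -> int) (v : 'I_(nV M)) (p : poly2) : Prop :=
  exists q : 'I_(nE M) -> poly2,
    (forall e, interior_edge e -> v \in edge_set e -> J_edge m rr e (q e)) /\
    p = \sum_(e | interior_edge e && (v \in edge_set e)) q e.

Definition face_edge_sign (f : 'I_(nF M)) (e : 'I_(nE M)) : R :=
  let s := [:: (fv1 f, fv2 f); (fv2 f, fv3 f); (fv3 f, fv1 f)] in
  if (etail e, ehead e) \in s then 1
  else if (ehead e, etail e) \in s then -1 else 0.

Definition bd2 (c : 'I_(nF M) -> poly2) (e : 'I_(nE M)) : poly2 :=
  \sum_f face_edge_sign f e *: c f.

Definition edge_vert_sign (e : 'I_(nE M)) (v : 'I_(nV M)) : R :=
  (v == ehead e)%:R - (v == etail e)%:R.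

Definition bd1 (c : 'I_(nE M) -> poly2) (v : 'I_(nV M)) : poly2 :=
  \sum_(e | interior_edge e) edge_vert_sign e v *: c e.

(* H_1(Q^r) = 0, unfolded: every 1-chain whose boundary lies in the
   subcomplex I^r is, modulo I^r, a boundary. *)
Definition H1_vanishes (m : nat) (rr : 'I_(nE M) -> int) : Prop :=
  forall c1 : 'I_(nE M) -> poly2,
    (forall e, interior_edge e -> inPm m (c1 e)) ->
    (forall v, interior_vertex v -> J_vert m rr v (bd1 c1 v)) ->
    exists c2 : 'I_(nF M) -> poly2,
      (forall f, inPm m (c2 f)) /\
      (forall e, interior_edge e -> J_edge m rr e (c1 e - bd2 c2 e)).

(* H_0(Q^r) = 0, unfolded: every 0-chain is a boundary modulo I^r. *)
Definition H0_vanishes (m : nat) (rr : 'I_(nE M) -> int) : Prop :=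
  forall c0 : 'I_(nV M) -> poly2,
    (forall v, interior_vertex v -> inPm m (c0 v)) ->
    exists c1 : 'I_(nE M) -> poly2,
      (forall e, interior_edge e -> inPm m (c1 e)) /\
      (forall v, interior_vertex v -> J_vert m rr v (c0 v - bd1 c1 v)).

Definition lower_acyclic (m : nat) (rr : 'I_(nE M) -> int) : Prop :=
  H1_vanishes m rr /\ H0_vanishes m rr.

End Mesh.

From HB Require Import structures.
From mathcomp Require Import all_boot all_order all_algebra.
From mathcomp Require Import mpoly.
Import Order.TTheory GRing.Theory Num.Theory.
Set Implicit Arguments. Unset Strict Implicit. Unset Printing Implicit Defensive.
Local Open Scope ring_scope.

(* Relaxing the smoothness across tau_1, tau_2, tau_3 only enlarges the ideals,
   so H_0 stays zero, and on the three edges the new edge ideals are all of P_m.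
   A 1-cycle c of Q^s may fail to be a cycle of Q^r only at the corners gamma_i.
   Surjectivity of phi gives a_i with (bd c)(gamma_i) - phi(a)_i in J^r_(gamma_i),
   and phi(a) is the boundary of the chain supported on the triangle that puts
   a_i on tau_i, oriented from gamma_i to gamma_(i-1).  Subtracting that chain
   from c yields a cycle of Q^r, hence a boundary modulo I^r; since the chains
   differ only on the tau_i, c is a boundary modulo I^s.  Only the surjectivity
   of phi is used: the values of r and the forms l_i play no role. *)

Lemma mem_setI_set1 (T : finType) (A B : {set T}) x :
  A :&: B = [set x] -> x \in A /\ x \in B.
Proof. by move=> AB; apply/setIP; rewrite AB set11. Qed.

Lemma set2_of_card2 (T : finType) (A : {set T}) x y :
  #|A| = 2 -> x \in A -> y \in A -> x != y -> A = [set x; y].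
Proof.
move=> cardA xA yA xy; apply/eqP; rewrite eq_sym eqEcard cards2 xy cardA.
by rewrite subUset !sub1set xA yA.
Qed.

Lemma mem_setI_set1_eq (T : finType) (A B : {set T}) x z :
  A :&: B = [set z] -> x \in A -> x \in B -> x = z.
Proof. by move=> AB xA xB; apply/set1P; rewrite -AB inE xA. Qed.

Lemma card_setU3_pointed (T : finType) (A B C : {set T}) x :
  #|A| = 2 -> #|B| = 2 -> #|C| = 2 ->
  A :&: B = [set x] -> B :&: C = [set x] -> C :&: A = [set x] ->
  #|A :|: B :|: C| = 4.
Proof.
move=> cA cB cC AB BC CA.
have cAB : #|A :|: B| = 3 by rewrite cardsU cA cB AB cards1.
by rewrite cardsU cAB cC setIUl setIC CA BC setUid cards1.
Qed.

Lemma triangle_corners_uniq (T : finType) (A B C F : {set T}) a b c :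
  #|A| = 2 -> #|B| = 2 -> #|C| = 2 -> A :|: B :|: C \subset F -> (#|F| <= 3)%N ->
  A :&: B = [set a] -> B :&: C = [set b] -> C :&: A = [set c] ->
  uniq [:: a; b; c].
Proof.
move=> cA cB cC sF cF AB BC CA.
have [aA aB] := mem_setI_set1 AB; have [bB bC] := mem_setI_set1 BC.
have [cC' cA'] := mem_setI_set1 CA.
have no_common x : x \in A -> x \in B -> x \in C -> False.
  move=> xA xB xC.
  have xa := mem_setI_set1_eq AB xA xB; have xb := mem_setI_set1_eq BC xB xC.
  have xc := mem_setI_set1_eq CA xC xA; rewrite -xa in AB; rewrite -xb in BC.
  rewrite -xc in CA.
  have := subset_leq_card sF; rewrite (card_setU3_pointed cA cB cC AB BC CA).
  by move=> /leq_trans /(_ cF).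
rewrite /= !inE !negb_or andbT.
apply/andP; split; [apply/andP; split|]; apply/eqP => E.
- by apply: (no_common a); rewrite // E.
- by apply: (no_common a); rewrite // E.
- by apply: (no_common b); rewrite // E.
Qed.

Section PolynomialSpace.
Variables (R : realFieldType) (m : nat).
Implicit Types (p q : {mpoly R[2]}).

Lemma inPm0 : inPm m (0 : {mpoly R[2]}).
Proof. by rewrite /inPm msize0. Qed.

Lemma inPmD p q : inPm m p -> inPm m q -> inPm m (p + q).
Proof.
by move=> hp hq; apply: leq_trans (msizeD_le _ _) _; rewrite geq_max hp hq.
Qed.

Lemma inPmN p : inPm m p -> inPm m (- p).
Proof. by rewrite /inPm msizeN. Qed.

Lemma inPmB p q : inPm m p -> inPm m q -> inPm m (p - q).
Proof. by move=> hp /inPmN; apply: inPmD. Qed.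

Lemma inPmZ (c : R) p : inPm m p -> inPm m (c *: p).
Proof. exact: leq_trans (msizeZ_le _ _). Qed.

Lemma inPm_sum (I : finType) (P : pred I) (F : I -> {mpoly R[2]}) :
  (forall i, P i -> inPm m (F i)) -> inPm m (\sum_(i | P i) F i).
Proof. by move=> h; elim/big_ind: _ => //; [exact: inPm0 | exact: inPmD]. Qed.

End PolynomialSpace.

Section Boundaries.
Variables (R : realFieldType) (M : mesh R).
Implicit Types (c d : 'I_(nE M) -> {mpoly R[2]}) (t : 'I_(nE M)).
Implicit Types (u v w : 'I_(nV M)).

Lemma card_edge_set t : etail t != ehead t -> #|edge_set t| = 2.
Proof. by rewrite cards2 => ->. Qed.

Lemma card_face_set (f : 'I_(nF M)) : (#|face_set f| <= 3)%N.
Proof.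
by rewrite (leq_trans (leq_card_setU _ _)) // cards2 cards1; case: (_ != _).
Qed.

Lemma triangle_face_edges (sigma : 'I_(nF M)) t1 t2 t3 g1 g2 g3 :
  planar_triangulation M ->
  [/\ face_has_edge sigma t1, face_has_edge sigma t2 & face_has_edge sigma t3] ->
  edge_set t1 :&: edge_set t2 = [set g1] ->
  edge_set t2 :&: edge_set t3 = [set g2] ->
  edge_set t3 :&: edge_set t1 = [set g3] ->
  [/\ uniq [:: g1; g2; g3], edge_set t1 = [set g1; g3],
      edge_set t2 = [set g2; g1] & edge_set t3 = [set g3; g2]].
Proof.
move=> HM [s1 s2 s3] Hg1 Hg2 Hg3.
have c2 t : #|edge_set t| = 2 by apply: card_edge_set; apply: HM.2.1.
have U : uniq [:: g1; g2; g3].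
  apply: triangle_corners_uniq (c2 t1) (c2 t2) (c2 t3) _ (card_face_set sigma)
    Hg1 Hg2 Hg3.
  by rewrite 2!subUset; apply/andP; split; first apply/andP.
have /andP[/andP[n12 n13] n23] : (g1 != g2) && (g1 != g3) && (g2 != g3).
  by move: U; rewrite /= !inE !negb_or andbT.
have [g1t1 g1t2] := mem_setI_set1 Hg1; have [g2t2 g2t3] := mem_setI_set1 Hg2.
have [g3t3 g3t1] := mem_setI_set1 Hg3.
split=> //; [exact: set2_of_card2 (c2 t1) g1t1 g3t1 n13 | |].
- by apply: set2_of_card2 (c2 t2) g2t2 g1t2 _; rewrite eq_sym.
- by apply: set2_of_card2 (c2 t3) g3t3 g2t3 _; rewrite eq_sym.
Qed.

Lemma bd1D c d v : bd1 (fun e => c e + d e) v = bd1 c v + bd1 d v.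
Proof. by rewrite /bd1 -big_split; apply: eq_bigr => e _; rewrite scalerDr. Qed.

Lemma bd1B c d v : bd1 (fun e => c e - d e) v = bd1 c v - bd1 d v.
Proof. by rewrite /bd1 -sumrB; apply: eq_bigr => e _; rewrite scalerBr. Qed.

Lemma bd1_inPm m c v :
  (forall e, interior_edge e -> inPm m (c e)) -> inPm m (bd1 c v).
Proof. by move=> h; apply: inPm_sum => e he; apply: inPmZ; apply: h. Qed.

Lemma bd2_inPm m (c : 'I_(nF M) -> {mpoly R[2]}) t :
  (forall f, inPm m (c f)) -> inPm m (bd2 c t).
Proof. by move=> h; apply: inPm_sum => f _; apply: inPmZ; apply: h. Qed.

Definition edge_chain t (p : {mpoly R[2]}) : 'I_(nE M) -> {mpoly R[2]} :=
  fun e => if e == t then p else 0.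

Lemma bd1_edge_chain t p v :
  interior_edge t -> bd1 (edge_chain t p) v = edge_vert_sign t v *: p.
Proof.
move=> ht; rewrite /bd1 (bigD1 t) //= /edge_chain eqxx big1 ?addr0 //.
by move=> e /andP[_ /negbTE ->]; rewrite scaler0.
Qed.

Lemma edge_vert_signM t u w v :
  u \in edge_set t -> w \in edge_set t -> u != w ->
  edge_vert_sign t v * edge_vert_sign t w = (v == w)%:R - (v == u)%:R.
Proof.
rewrite /edge_vert_sign /edge_set !inE.
case/orP=> /eqP-> /orP[]/eqP->; rewrite ?eqxx // => uw.
- by rewrite (eq_sym (ehead t)) (negbTE uw) subr0 mulr1.
- by rewrite (eq_sym (etail t)) (negbTE uw) sub0r mulrN1 opprB.
Qed.

Lemma bd1_oriented_edge t u w p v :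
  interior_edge t -> u \in edge_set t -> w \in edge_set t -> u != w ->
  bd1 (edge_chain t (edge_vert_sign t w *: p)) v =
    ((v == w)%:R - (v == u)%:R) *: p.
Proof.
by move=> ht uE wE uw; rewrite bd1_edge_chain // scalerA (edge_vert_signM _ uE).
Qed.

End Boundaries.

Section Relax.
Variables (R : realFieldType) (M : mesh R) (m : nat) (rr : 'I_(nE M) -> int)
  (s : seq 'I_(nE M)).

Definition relax : 'I_(nE M) -> int := fun e => if e \in s then -1 else rr e.

Lemma J_edge_relax e p : J_edge m rr e p -> J_edge m relax e p.
Proof.
rewrite /J_edge /relax; case: ifP => // _ [hp _]; split => //; exists p.
by rewrite addNr expr0 mulr1.
Qed.

Lemma J_edge_relaxed_full e p : e \in s -> inPm m p -> J_edge m relax e p.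
Proof.
rewrite /J_edge /relax => -> hp; split => //; exists p.
by rewrite addNr expr0 mulr1.
Qed.

Lemma J_vert_relax v p : J_vert m rr v p -> J_vert m relax v p.
Proof.
by move=> [q [hq ->]]; exists q; split => // e he hv; apply/J_edge_relax/hq.
Qed.

Lemma J_vert_unrelax v p : (forall e, e \in s -> v \notin edge_set e) ->
  J_vert m relax v p -> J_vert m rr v p.
Proof.
move=> vs [q [hq ->]]; exists q; split => // e he hv; move: (hq e he hv).
by rewrite /J_edge /relax; case: ifPn => // /vs; rewrite hv.
Qed.

Lemma H0_vanishes_relax : H0_vanishes m rr -> H0_vanishes m relax.
Proof.
move=> H0 c0 hc0; have [c1 [hc1 hJ]] := H0 c0 hc0.
by exists c1; split => // v hv; apply/J_vert_relax/hJ.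
Qed.

(* A correction supported on the relaxed edges is invisible modulo I^relax,
   since J^relax is all of P_m there. *)
Lemma H1_vanishes_relax : H1_vanishes m rr ->
  (forall c1 : 'I_(nE M) -> {mpoly R[2]},
     (forall e, interior_edge e -> inPm m (c1 e)) ->
     (forall v, interior_vertex v -> J_vert m relax v (bd1 c1 v)) ->
     exists d : 'I_(nE M) -> {mpoly R[2]},
       [/\ forall e, inPm m (d e), forall e, e \notin s -> d e = 0 &
           forall v, interior_vertex v -> J_vert m rr v (bd1 c1 v - bd1 d v)]) ->
  H1_vanishes m relax.
Proof.
move=> H1 correct c1 hc1 hJ; have [d [hd ds hJd]] := correct c1 hc1 hJ.
have hc1d e : interior_edge e -> inPm m (c1 e - d e).
  by move=> he; apply: inPmB; [apply: hc1 | apply: hd].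
have hJ1d v : interior_vertex v -> J_vert m rr v (bd1 (fun e => c1 e - d e) v).
  by move=> hv; rewrite bd1B; apply: hJd.
have [c2 [hc2 hJe]] := H1 _ hc1d hJ1d.
exists c2; split => // e he; have [es|es] := boolP (e \in s).
  apply: J_edge_relaxed_full => //.
  by apply: inPmB; [apply: hc1 | apply: bd2_inPm].
by move: (hJe e he); rewrite ds // subr0 => /J_edge_relax.
Qed.

End Relax.

Section TriangleChain.
Variables (R : realFieldType) (M : mesh R) (m : nat).
Variables (t1 t2 t3 : 'I_(nE M)) (g1 g2 g3 : 'I_(nV M)).
Hypotheses (It1 : interior_edge t1) (It2 : interior_edge t2)
  (It3 : interior_edge t3).
Hypotheses (Ht1 : edge_set t1 = [set g1; g3]) (Ht2 : edge_set t2 = [set g2; g1])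
  (Ht3 : edge_set t3 = [set g3; g2]).
Hypothesis Hcorners : uniq [:: g1; g2; g3].
Variables a1 a2 a3 : {mpoly R[2]}.

(* a_i sits on tau_i oriented from gamma_i to gamma_(i-1), whatever the
   orientation of the edge tau_i itself. *)
Definition triangle_chain : 'I_(nE M) -> {mpoly R[2]} := fun e =>
  edge_chain t1 (edge_vert_sign t1 g3 *: a1) e +
  edge_chain t2 (edge_vert_sign t2 g1 *: a2) e +
  edge_chain t3 (edge_vert_sign t3 g2 *: a3) e.

Lemma triangle_chain_inPm : inPm m a1 -> inPm m a2 -> inPm m a3 ->
  forall e, inPm m (triangle_chain e).
Proof.
move=> h1 h2 h3 e; rewrite /triangle_chain /edge_chain.
do 2?apply: inPmD; by case: ifP => _; [apply: inPmZ | apply: inPm0].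
Qed.

Lemma triangle_chain_out e : e \notin [:: t1; t2; t3] -> triangle_chain e = 0.
Proof.
rewrite !inE !negb_or => /and3P[/negbTE n1 /negbTE n2 /negbTE n3].
by rewrite /triangle_chain /edge_chain n1 n2 n3 !addr0.
Qed.

Lemma bd1_triangle_chain v :
  bd1 triangle_chain v =
    if v == g1 then - a1 + a2 else if v == g2 then - a2 + a3
    else if v == g3 then a1 - a3 else 0.
Proof.
have /andP[/andP[n12 n13] n23] : (g1 != g2) && (g1 != g3) && (g2 != g3).
  by move: Hcorners; rewrite /= !inE !negb_or andbT.
have mem (t : 'I_(nE M)) x y :
    edge_set t = [set x; y] -> x \in edge_set t /\ y \in edge_set t.
  by move=> ->; rewrite set21 set22.
have [g1t1 g3t1] := mem _ _ _ Ht1; have [g2t2 g1t2] := mem _ _ _ Ht2.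
have [g3t3 g2t3] := mem _ _ _ Ht3.
have [n21 n32] : g2 != g1 /\ g3 != g2 by rewrite !(eq_sym g2) (eq_sym g3).
rewrite /triangle_chain !bd1D (bd1_oriented_edge _ _ It1 g1t1 g3t1 n13).
rewrite (bd1_oriented_edge _ _ It2 g2t2 g1t2 n21).
rewrite (bd1_oriented_edge _ _ It3 g3t3 g2t3 n32).
have [->|_] := eqVneq v g1.
  rewrite (negbTE n12) (negbTE n13) /=.
  by rewrite !subr0 sub0r scaleN1r scale1r scale0r addr0.
have [->|_] := eqVneq v g2.
  by rewrite (negbTE n23) /= !subr0 sub0r scaleN1r scale1r scale0r add0r.
have [_|_] := eqVneq v g3.
  by rewrite /= !subr0 sub0r scaleN1r scale1r scale0r addr0.
by rewrite /= !subr0 !scale0r !addr0.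
Qed.

Lemma J_vert_triangle_correction (rr : 'I_(nE M) -> int) c1 :
  (forall v, interior_vertex v ->
     J_vert m (relax rr [:: t1; t2; t3]) v (bd1 c1 v)) ->
  J_vert m rr g1 (bd1 c1 g1 - (- a1 + a2)) ->
  J_vert m rr g2 (bd1 c1 g2 - (- a2 + a3)) ->
  J_vert m rr g3 (bd1 c1 g3 - (a1 - a3)) ->
  forall v, interior_vertex v ->
    J_vert m rr v (bd1 c1 v - bd1 triangle_chain v).
Proof.
move=> hJ J1 J2 J3 v hv; rewrite bd1_triangle_chain.
have [->|v1] := eqVneq v g1; first exact: J1.
have [->|v2] := eqVneq v g2; first exact: J2.
have [->|v3] := eqVneq v g3; first exact: J3.
rewrite subr0; apply: J_vert_unrelax (hJ v hv) => e.
rewrite !in_cons in_nil orbF => /or3P[]/eqP->;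
  by rewrite ?Ht1 ?Ht2 ?Ht3 !inE negb_or ?v1 ?v2 ?v3.
Qed.

End TriangleChain.

Theorem mainTheorem2 (R : realFieldType) (M : mesh R)
  (HM : planar_triangulation M) (m : nat) (r : int) (hr : -1 <= r)
  (rr : 'I_(nE M) -> int) (Hrr : smoothness_distribution rr)
  (Hvals : forall e, interior_edge e -> rr e = r \/ rr e = -1)
  (Hacyc : lower_acyclic m rr)
  (sigma : 'I_(nF M)) (t1 t2 t3 : 'I_(nE M)) (g1 g2 g3 : 'I_(nV M))
  (Hdist : uniq [:: t1; t2; t3])
  (Hsides : [/\ face_has_edge sigma t1, face_has_edge sigma t2 & face_has_edge sigma t3])
  (Hint : [/\ interior_edge t1, interior_edge t2 & interior_edge t3])
  (Hg1 : edge_set t1 :&: edge_set t2 = [set g1])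
  (Hg2 : edge_set t2 :&: edge_set t3 = [set g2])
  (Hg3 : edge_set t3 :&: edge_set t1 = [set g3])
  (Hgint : [/\ interior_vertex g1, interior_vertex g2 & interior_vertex g3])
  (Hr : [/\ rr t1 = r, rr t2 = r & rr t3 = r])
  (Hinc : forall e, interior_edge e ->
            (g1 \in edge_set e) || (g2 \in edge_set e) || (g3 \in edge_set e) ->
            rr e != -1)
  (l1 l2 l3 : {mpoly R[2]})
  (Hl : [/\ affine_vanishing_on l1 t1, affine_vanishing_on l2 t2
          & affine_vanishing_on l3 t3])
  (* coker(phi) = 0, where phi : (+)_i P_m/<l_i^(r+1)> -> (+)_i P_m/J^r_(g_i);
     elements of the source are represented by a_i in P_m *)
  (Hcoker : forall b1 b2 b3 : {mpoly R[2]},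
      inPm m b1 -> inPm m b2 -> inPm m b3 ->
      exists a1 a2 a3 : {mpoly R[2]},
        [/\ inPm m a1, inPm m a2 & inPm m a3] /\
        [/\ J_vert m rr g1 (b1 - (- a1 + a2)),
            J_vert m rr g2 (b2 - (- a2 + a3)) &
            J_vert m rr g3 (b3 - (a1 - a3))]) :
  lower_acyclic m
    (fun e => if e \in [:: t1; t2; t3] then -1 else rr e).
Proof.
have [[H1 H0] [It1 It2 It3]] := (Hacyc, Hint).
have [Hcorners Ht1 Ht2 Ht3] := triangle_face_edges HM Hsides Hg1 Hg2 Hg3.
split; first apply: (H1_vanishes_relax H1); last exact: H0_vanishes_relax.
move=> c1 hc1 hJ.
have [a1 [a2 [a3 [[ha1 ha2 ha3] [J1 J2 J3]]]]] :=
  Hcoker _ _ _ (bd1_inPm g1 hc1) (bd1_inPm g2 hc1) (bd1_inPm g3 hc1).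
exists (triangle_chain t1 t2 t3 g1 g2 g3 a1 a2 a3); split.
- exact: triangle_chain_inPm.
- exact: triangle_chain_out.
- exact: J_vert_triangle_correction.
Qed.
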